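(* Let $X$ be a topological space homeomorphic to $G^\ast$ for some g-cell structure $\{(G_n,r_n),g_n^{n+1}\}$ with inverse limit $G_\infty$ and natural relation $r$. Suppose that (i) every $G_n$ is a metrizable (metric) space, and (ii) for every $\bar x\in G_\infty$ and every open set $A\subset G_\infty$ with $B(\bar x,r)\subset A$ there exists a basic open set $U=g_i^{-1}(V)$ ($i\in\mathbb{N}$, $V\subset G_i$ open) with $\bar x\in U$ and $B(U,r)\subset A$. Then $X$ is normal.
   Context: A cellular graph is a pair $(G,r)$ where $G$ is a nonempty topological space and $r\subset G\times G$ is a reflexive and symmetric relation. For $u\in G$, $B(u,r)=\{v\in G:(u,v)\in r\}$, and for $A\subset G$, $B(A,r)=\bigcup_{a\in A}B(a,r)$. An inverse sequence of cellular graphs $\{(G_n,r_n),g_n^{n+1}\}$ consists of cellular graphs $(G_n,r_n)$, $n\in\mathbb{N}$, and continuous maps $g_n^{n+1}:G_{n+1}\to G_n$ such that $(g_n^{n+1}(x),g_n^{n+1}(y))\in r_n$ whenever $(x,y)\in r_{n+1}$; $g_n^n=\mathrm{id}$, $g_n^l=g_n^{n+1}\circ\cdots\circ g_{l-1}^{l}$. Its inverse limit is $G_\infty=\{(x_n)\in\prod_n G_n: g_i^j(x_j)=x_i\ \forall j\ge i\}$ with the subspace of the product topology; $g_i:G_\infty\to G_i$ is the restricted $i$-th projection. The natural relation on $G_\infty$ is $r=\{(\bar x,\bar y):(x_n,y_n)\in r_n\ \forall n\}$. The sequence is a g-cell structure if $r$ is an equivalence relation; then $G^\ast=G_\infty/r$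 with the quotient topology. *)

From HB Require Import structures.
From mathcomp Require Import all_boot all_order all_algebra.
From mathcomp Require Import all_classical all_reals.
From mathcomp Require Import topology_structure initial_topology subtype_topology
  function_spaces separation_axioms.
From Stdlib Require Import Reals.

Set Implicit Arguments.
Unset Strict Implicit.
Unset Printing Implicit Defensive.

Local Open Scope classical_set_scope.

Definition cellular_graph (G : topologicalType) (r : G -> G -> Prop) : Prop :=
  (exists x : G, True) /\ (forall x, r x x) /\ (forall x y, r x y -> r y x).

Definition inverse_seq_cg (G : nat -> topologicalType)
  (r : forall n, G n -> G n -> Prop) (g : forall n, G n.+1 -> G n) : Prop :=
  (forall n, cellular_graph (r n)) /\
  (forall n, continuous (g n)) /\
  (forall n (x y : G n.+1), r n.+1 x y -> r n (g n x) (g n y)).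

Definition inv_lim_set (G : nat -> topologicalType) (g : forall n, G n.+1 -> G n)
  : set (prod_topology G) :=
  [set x | forall n, g n (x n.+1) = x n].

Definition Ginf (G : nat -> topologicalType) (g : forall n, G n.+1 -> G n) :=
  set_type (inv_lim_set g).

Definition proj_inf (G : nat -> topologicalType) (g : forall n, G n.+1 -> G n)
  (i : nat) (x : Ginf g) : G i := (set_val x : prod_topology G) i.
Arguments proj_inf {G} g i x.

Definition natrel (G : nat -> topologicalType) (r : forall n, G n -> G n -> Prop)
  (g : forall n, G n.+1 -> G n) (x y : Ginf g) : Prop :=
  forall n, r n (proj_inf g n x) (proj_inf g n y).
Arguments natrel {G} r g x y.

Definition Bpt (T : Type) (r : T -> T -> Prop) (u : T) : set T := [set v | r u v].
Definition Bset (T : Type) (r : T -> T -> Prop) (A : set T) : set T :=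
  [set v | exists2 a, A a & r a v].

Definition equivalence_rel (T : Type) (r : T -> T -> Prop) : Prop :=
  (forall x, r x x) /\ (forall x y, r x y -> r y x) /\
  (forall x y z, r x y -> r y z -> r x z).

Definition gcell_structure (G : nat -> topologicalType)
  (r : forall n, G n -> G n -> Prop) (g : forall n, G n.+1 -> G n) : Prop :=
  inverse_seq_cg r g /\ equivalence_rel (natrel r g).

Section Quotient.
Variables (T : topologicalType) (e : T -> T -> Prop).

Definition eclasses := {C : set T | exists x, C = Bpt e x}.

HB.instance Definition _ := gen_eqMixin eclasses.
HB.instance Definition _ := gen_choiceMixin eclasses.

Definition eclass (x : T) : eclasses := exist _ (Bpt e x) (ex_intro _ x erefl).

Definition eclasses_open (U : set eclasses) : Prop := open (eclass @^-1` U).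

Program Definition eclasses_topology_mixin :=
  @isOpenTopological.Build eclasses eclasses_open _ _ _.
Next Obligation. by rewrite /eclasses_open preimage_setT; exact: openT. Qed.
Next Obligation.
by move=> A B oA oB; rewrite /eclasses_open preimage_setI; exact: openI.
Qed.
Next Obligation.
move=> I f ofi; rewrite /eclasses_open preimage_bigcup.
by apply: bigcup_open => i _; exact: ofi.
Qed.
HB.instance Definition _ := eclasses_topology_mixin.

End Quotient.

Definition Gstar (G : nat -> topologicalType)
  (r : forall n, G n -> G n -> Prop) (g : forall n, G n.+1 -> G n) : topologicalType :=
  eclasses (natrel r g).

Definition homeomorphic (X Y : topologicalType) : Prop :=
  exists (f : X -> Y) (h : Y -> X),
    cancel f h /\ cancel h f /\ continuous f /\ continuous h.

Definition metrizable (T : topologicalType) : Prop :=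
  exists d : T -> T -> R,
    (forall x y, (0 <= d x y)%R) /\
    (forall x y, d x y = 0%R <-> x = y) /\
    (forall x y, d x y = d y x) /\
    (forall x y z, (d x z <= d x y + d y z)%R) /\
    (forall A : set T, open A <->
       (forall x, A x -> exists2 eps : R, (0 < eps)%R &
          [set y | (d x y < eps)%R] `<=` A)).

From Pilot Require Import Defs.
From HB Require Import structures.
From mathcomp Require Import all_boot all_order all_algebra.
From mathcomp Require Import all_classical all_reals.
From mathcomp Require Import topology_structure initial_topology subtype_topology
  function_spaces separation_axioms supremum_topology urysohn Rstruct.
From Stdlib Require Import Reals Lra.

Local Open Scope classical_set_scope.

(* The proof separates disjoint closed sets by disjoint open sets, in four steps.
   1. G_oo is a subspace of the countable product of the metric spaces G_n.
      Rather than a metric on it, with d'_n = min(1/(n+1), d_n) the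
      relation "sup_n d'_n(x_n, y_n) < e" is a system of balls which is
      symmetric, satisfies the triangle inequality and generates the topology.
      The classical half-radius argument then separates closed sets in any space
      carrying such a ball system ([ball_separates_closed]).
   2. Hypothesis (ii) makes the r-saturation of every closed set closed
      ([saturation_closed]); hence the open sets separating two closed
      r-saturated sets can be shrunk to r-saturated ones ([saturated_separation]).
   3. Closed sets of G* = G_oo/r pull back to closed saturated sets, and open
      saturated sets push forward to open sets ([quotient_separates_closed]).
   4. Separation of closed sets transfers along the homeomorphism X ~ G*, and is
      normality by the library characterisation [normal_openP]. *)

Definition separates_closed (T : topologicalType) : Prop :=
  forall A B : set T, closed A -> closed B -> A `&` B = set0 ->
  exists U V : set T, [/\ open U, open V, A `<=` U, B `<=` V & U `&` V = set0].

(* A topology generated by a symmetric ball system with the triangle inequality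
   separates closed sets; [ball x e y] reads "y lies in the e-ball around x". *)
Section ball_separation.
Local Open Scope R_scope.
Variables (T : topologicalType) (ball : T -> R -> T -> Prop).
Hypothesis ballC : forall {x y e}, ball x e y -> ball y e x.
Hypothesis ball_triangle :
  forall {x y z e1 e2}, ball x e1 y -> ball y e2 z -> ball x (e1 + e2) z.
Hypothesis ball_le : forall {x y e1 e2}, e1 <= e2 -> ball x e1 y -> ball x e2 y.
Hypothesis ball_base :
  forall {W : set T} {x}, open W -> W x -> exists2 e, 0 < e & ball x e `<=` W.
Hypothesis ball_nbhs : forall {x e}, 0 < e -> nbhs x (ball x e).

Lemma ball_radius {C D : set T} : closed D -> C `&` D = set0 ->
  exists rad : T -> R, forall c, C c -> 0 < rad c /\ ball c (rad c) `<=` ~` D.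
Proof.
move=> cD /disjoints_subset CD.
suff /choice[rad hrad] : forall c, exists r, C c -> 0 < r /\ ball c r `<=` ~` D.
  by exists rad.
move=> c; have [Cc|nCc] := pselect (C c); last by exists 1 => /nCc.
by have [r r0 hr] := ball_base (closed_openC cD) (CD c Cc); exists r => _.
Qed.

(* Separate A and B by the unions of the interiors of half-radius balls;
   a common point would put the centres within the larger of the two radii. *)
Lemma ball_separates_closed : separates_closed T.
Proof.
move=> A B cA cB AB.
have [rA hA] := ball_radius cB AB.
have [rB hB] := ball_radius cA (etrans (setIC B A) AB).
exists (\bigcup_(a in A) (ball a (rA a / 2))°),
       (\bigcup_(b in B) (ball b (rB b / 2))°); split.
- by apply: bigcup_open => a _; exact: open_interior.
- by apply: bigcup_open => b _; exact: open_interior.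
- move=> a Aa; exists a => //; apply: ball_nbhs; have := (hA a Aa).1; lra.
- move=> b Bb; exists b => //; apply: ball_nbhs; have := (hB b Bb).1; lra.
apply/disjoints_subset => z [a Aa /interior_subset az] [b Bb /interior_subset bz].
have ab := ball_triangle az (ballC bz).
have [le_ba|lt_ab] := Rle_lt_dec (rB b) (rA a).
- by apply: (hA a Aa).2 Bb; apply: ball_le ab; lra.
- by apply: (hB b Bb).2 Aa; apply: ballC; apply: ball_le ab; lra.
Qed.

End ball_separation.

Definition is_metric {T : topologicalType} (d : T -> T -> R) : Prop :=
  (forall x y, (0 <= d x y)%R) /\
  (forall x y, d x y = 0%R <-> x = y) /\
  (forall x y, d x y = d y x) /\
  (forall x y z, (d x z <= d x y + d y z)%R) /\
  (forall A : set T, open A <->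
     (forall x, A x -> exists2 eps : R, (0 < eps)%R &
        [set y | (d x y < eps)%R] `<=` A)).

Lemma cvg_coordinatewise (I : Type) (K : I -> topologicalType)
    (F : set_system (prod_topology K)) (x : prod_topology K) : Filter F ->
  (forall i (A : set (K i)), open A -> A (x i) -> F [set y | A (y i)]) -> F --> x.
Proof.
move=> FF Fx; apply/cvg_sup => i A /=.
rewrite (@nbhsE (Topological.Pack _)) => -[_ [[C oC <-] Cx] CA].
exact: filterS CA (Fx i C oC Cx).
Qed.

Section countable_product.
Local Open Scope R_scope.
Context {G : nat -> topologicalType} {d : forall n, G n -> G n -> R}.
Hypothesis d_metric : forall n, is_metric (d n).

Lemma inv_succ_gt0 n : 0 < / INR n.+1.
Proof. by apply/Rinv_0_lt_compat/lt_0_INR/ssrnat.ltP. Qed.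

Lemma metric_ball_open n (a : G n) rho : open [set y | d n a y < rho].
Proof.
have [_ [_ [_ [d_tri d_open]]]] := d_metric n.
apply/d_open => y /= ay; exists (rho - d n a y); first lra.
by move=> z /= yz; have := d_tri a y z; lra.
Qed.

(* The n-th coordinate distance, truncated at 1/(n+1) so that only finitely
   many coordinates matter below any given radius. *)
Definition trunc_dist n (x y : prod_topology G) : R :=
  Rmin (/ INR n.+1) (d n (x n) (y n)).

(* [prod_ball x e y]: sup_n trunc_dist n x y < e, the supremum being attained
   strictly below e. *)
Definition prod_ball (x : prod_topology G) (e : R) (y : prod_topology G) : Prop :=
  exists2 delta, delta < e & forall n, trunc_dist n x y <= delta.

Lemma prod_ballC x y e : prod_ball x e y -> prod_ball y e x.
Proof.
move=> [delta lt_e le_delta]; exists delta => // n.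
have [_ [_ [dC _]]] := d_metric n.
by rewrite /trunc_dist dC; exact: le_delta.
Qed.

Lemma trunc_dist_triangle n x y z :
  trunc_dist n x z <= trunc_dist n x y + trunc_dist n y z.
Proof.
have [d_ge0 [_ [_ [d_tri _]]]] := d_metric n.
have := d_tri (x n) (y n) (z n); have := d_ge0 (x n) (y n).
have := d_ge0 (y n) (z n); have := inv_succ_gt0 n.
by rewrite /trunc_dist /Rmin; repeat case: Rle_dec; lra.
Qed.

Lemma prod_ball_triangle x y z e1 e2 :
  prod_ball x e1 y -> prod_ball y e2 z -> prod_ball x (e1 + e2) z.
Proof.
move=> [delta1 lt1 le1] [delta2 lt2 le2]; exists (delta1 + delta2); first lra.
by move=> n; have := trunc_dist_triangle n x y z; have := le1 n; have := le2 n; lra.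
Qed.

Lemma prod_ball_le x y e1 e2 : e1 <= e2 -> prod_ball x e1 y -> prod_ball x e2 y.
Proof. by move=> le12 [delta lt1 le1]; exists delta => //; lra. Qed.

(* Every open set around x contains a product ball around x: the balls form
   a filter converging coordinatewise to x. *)
Lemma prod_ball_base {W : set (prod_topology G)} {x} :
  open W -> W x -> exists2 e, 0 < e & prod_ball x e `<=` W.
Proof.
move=> oW Wx.
pose F := filter_from [set e | 0 < e] (prod_ball x).
have FF : Filter F.
  apply: filter_from_filter; first by exists 1; rewrite /=; lra.
  move=> e1 e2 /= e1_gt0 e2_gt0; exists (Rmin e1 e2).
    by rewrite /Rmin; case: Rle_dec.
  by move=> y /= xy; split; apply: prod_ball_le xy; [exact: Rmin_l|exact: Rmin_r].
have Fx : F --> x.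
  apply: cvg_coordinatewise => i A oA Ax.
  have [_ [_ [_ [_ d_open]]]] := d_metric i.
  have [rho rho_gt0 rhoA] := (d_open A).1 oA _ Ax.
  exists (Rmin rho (/ INR i.+1)).
    by have := inv_succ_gt0 i; rewrite /= /Rmin; case: Rle_dec.
  move=> y [delta lt_delta le_delta]; apply: rhoA => /=.
  move: (le_delta i) lt_delta; rewrite /trunc_dist /Rmin.
  by repeat case: Rle_dec; lra.
by have [e e_gt0 eW] := Fx W (open_nbhs_nbhs (conj oW Wx)); exists e.
Qed.

(* Product balls are neighbourhoods: only the finitely many coordinates
   n < N with 1/N < e/2 constrain membership. *)
Lemma prod_ball_nbhs x e : 0 < e -> nbhs x (prod_ball x e).
Proof.
move=> e_gt0; have [N [invN N_gt0]] := archimed_cor1 (e / 2) ltac:(lra).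
have coord n : nbhs x [set y : prod_topology G | d n (x n) (y n) < e / 2].
  have [_ [d_xx _]] := d_metric n.
  have coord_cont : continuous (fun y : prod_topology G => y n).
    exact: (@proj_continuous nat G n).
  apply: (coord_cont x [set z | d n (x n) z < e / 2]).
  apply: open_nbhs_nbhs; split.
    exact: metric_ball_open.
  by rewrite /= (d_xx _ _).2 //; lra.
have head : nbhs x [set y | forall n, (n < N)%nat -> d n (x n) (y n) < e / 2].
  elim: (N) => [|k IH]; first by apply: filterS filterT.
  apply: filterS (filterI IH (coord k)) => y [lt_k lt_yk] n.
  by rewrite ltnS leq_eqVlt => /predU1P[->|/lt_k].
apply: filterS head => y head_y; exists (e / 2); first lra.
move=> n; rewrite /trunc_dist; have [lt_nN|le_Nn] := ltnP n N.
  by have := head_y n lt_nN; have := Rmin_r (/ INR n.+1) (d n (x n) (y n)); lra.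
have : / INR n.+1 <= / INR N.
  apply: Rinv_le_contravar; first exact: lt_0_INR.
  by apply/le_INR/ssrnat.leP; exact: leqW.
by have := Rmin_l (/ INR n.+1) (d n (x n) (y n)); lra.
Qed.

Lemma subspace_separates_closed (S : set (prod_topology G)) :
  separates_closed (set_type S).
Proof.
apply: (@ball_separates_closed _ (fun x e y => prod_ball (set_val x) e (set_val y))).
- by move=> x y e; exact: prod_ballC.
- by move=> x y z e1 e2; exact: prod_ball_triangle.
- by move=> x y e1 e2; exact: prod_ball_le.
- move=> W x [Q oQ QW] Wx.
  have Qx : Q (set_val x) by rewrite -QW in Wx.
  have [e e_gt0 eQ] := prod_ball_base oQ Qx.
  by exists e => // y /eQ; rewrite -QW.
- move=> x e e_gt0; apply: (@initial_continuous _ _ set_val x).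
  exact: prod_ball_nbhs.
Qed.

End countable_product.

Definition saturated {T : Type} (e : T -> T -> Prop) (S : set T) : Prop :=
  forall x y, S x -> e x y -> S y.

Definition separates_saturated_closed {T : topologicalType} (e : T -> T -> Prop) :=
  forall A B : set T, closed A -> closed B -> saturated e A -> saturated e B ->
  A `&` B = set0 ->
  exists U V : set T, [/\ open U /\ saturated e U, open V /\ saturated e V,
                          A `<=` U, B `<=` V & U `&` V = set0].

Section saturation.
Context {T : topologicalType} {e : T -> T -> Prop}.
Hypothesis e_equiv : Defs.equivalence_rel e.

(* The points of W whose whole e-class lies in W. *)
Definition saturated_core (W : set T) : set T := ~` Bset e (~` W).

Lemma saturated_core_sub W : saturated_core W `<=` W.
Proof.
have [e_refl _] := e_equiv.
by move=> x coreWx; apply: contrapT => nWx; apply: coreWx; exists x.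
Qed.

Lemma saturated_core_saturated W : saturated e (saturated_core W).
Proof.
have [_ [e_sym e_trans]] := e_equiv.
move=> x y coreWx exy [c nWc ecy]; apply: coreWx; exists c => //.
exact: e_trans ecy (e_sym _ _ exy).
Qed.

Lemma saturated_sub_core S W : saturated e S -> S `<=` W -> S `<=` saturated_core W.
Proof.
have [_ [e_sym _]] := e_equiv.
by move=> satS SW x Sx [c nWc ecx]; apply/nWc/SW; exact: satS Sx (e_sym _ _ ecx).
Qed.

(* When saturations of closed sets are closed, the saturated cores of separating
   open sets are open, saturated, and still separate the two saturated sets. *)
Lemma saturated_separation :
  (forall C : set T, closed C -> closed (Bset e C)) ->
  separates_closed T -> separates_saturated_closed e.
Proof.
move=> sat_closed sepT A B cA cB satA satB AB.
have [U [V [oU oV AU BV UV]]] := sepT A B cA cB AB.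
exists (saturated_core U), (saturated_core V); split.
- split; last exact: saturated_core_saturated.
  exact/closed_openC/sat_closed/open_closedC.
- split; last exact: saturated_core_saturated.
  exact/closed_openC/sat_closed/open_closedC.
- exact: saturated_sub_core.
- exact: saturated_sub_core.
apply/disjoints_subset => z /saturated_core_sub Uz /saturated_core_sub Vz.
have : (U `&` V) z by [].
by rewrite UV.
Qed.

End saturation.

Section quotient.
Context {T : topologicalType} {e : T -> T -> Prop}.
Hypothesis e_equiv : Defs.equivalence_rel e.

Lemma eclass_eq x y : e x y -> eclass e x = eclass e y.
Proof.
have [_ [e_sym e_trans]] := e_equiv.
move=> exy; apply: eq_exist; apply/seteqP; split => z /=.
  by move=> exz; exact: e_trans (e_sym _ _ exy) exz.
by move=> eyz; exact: e_trans exy eyz.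
Qed.

Lemma eclass_related x y : eclass e x = eclass e y -> e x y.
Proof.
have [e_refl _] := e_equiv.
move=> /(congr1 sval) /= classes_eq.
have : Bpt e y y by exact: e_refl.
by rewrite -classes_eq.
Qed.

Lemma eclass_surj (C : eclasses e) : exists x, eclass e x = C.
Proof. by case: C => S [x defS]; exists x; apply: eq_exist; rewrite defS. Qed.

Lemma eclass_continuous : continuous (eclass e).
Proof. by apply/continuousP. Qed.

Lemma preimage_eclass_saturated (C : set (eclasses e)) :
  saturated e (eclass e @^-1` C).
Proof. by move=> x y /= Cx /eclass_eq <-. Qed.

Lemma preimage_image_eclass (W : set T) :
  saturated e W -> eclass e @^-1` (eclass e @` W) = W.
Proof.
move=> satW; apply/seteqP; split => z /=; last by move=> Wz; exists z.
by move=> [w Ww /eclass_related ewz]; exact: satW Ww ewz.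
Qed.

(* The quotient by e separates closed sets as soon as closed saturated sets
   of T are separated by open saturated sets: pull back, separate, push forward. *)
Lemma quotient_separates_closed :
  separates_saturated_closed e -> separates_closed (eclasses e).
Proof.
move=> sepT A B cA cB AB.
have pre_closed C : closed C -> closed (eclass e @^-1` C).
  exact: (continuous_closedP _).1 eclass_continuous C.
have preAB : eclass e @^-1` A `&` eclass e @^-1` B = set0.
  by rewrite -preimage_setI AB preimage_set0.
have [U [V [[oU satU] [oV satV] AU BV UV]]] :=
  sepT _ _ (pre_closed A cA) (pre_closed B cB)
    (preimage_eclass_saturated A) (preimage_eclass_saturated B) preAB.
exists (eclass e @` U), (eclass e @` V); split.
- by change (open (eclass e @^-1` (eclass e @` U))); rewrite preimage_image_eclass.
- by change (open (eclass e @^-1` (eclass e @` V))); rewrite preimage_image_eclass.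
- by move=> C AC; have [x defC] := eclass_surj C; exists x => //; apply: AU; rewrite /= defC.
- by move=> C BC; have [x defC] := eclass_surj C; exists x => //; apply: BV; rewrite /= defC.
apply/disjoints_subset => _ [u Uu <-] [v Vv /eclass_related evu].
have : (U `&` V) u by split => //; exact: satV Vv evu.
by rewrite UV.
Qed.

End quotient.

Lemma homeomorphic_separates_closed {X Y : topologicalType} :
  homeomorphic X Y -> separates_closed Y -> separates_closed X.
Proof.
move=> [f [h [fK [hK [f_cont h_cont]]]]] sepY A B cA cB AB.
have pre_closed C : closed C -> closed (h @^-1` C).
  exact: (continuous_closedP _).1 h_cont C.
have hAB : h @^-1` A `&` h @^-1` B = set0.
  by rewrite -preimage_setI AB preimage_set0.
have [U [V [oU oV AU BV UV]]] := sepY _ _ (pre_closed A cA) (pre_closed B cB) hAB.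
exists (f @^-1` U), (f @^-1` V); split.
- exact: (continuousP _).1 f_cont U oU.
- exact: (continuousP _).1 f_cont V oV.
- by move=> a Aa; apply: AU; rewrite /= fK.
- by move=> b Bb; apply: BV; rewrite /= fK.
by rewrite -preimage_setI UV preimage_set0.
Qed.

Lemma proj_inf_continuous (G : nat -> topologicalType)
    (g : forall n, G n.+1 -> G n) i :
  continuous (proj_inf g i).
Proof.
move=> x; exact: (continuous_comp
  (@initial_continuous _ _ (@set_val _ (inv_lim_set g)) x) (@proj_continuous nat G i _)).
Qed.

(* Hypothesis (ii) of the theorem makes the r-saturation of a closed subset
   of G_oo closed: outside B(C, r), the class of x misses C, hence so does the
   saturation of a whole basic neighbourhood of x. *)
Lemma saturation_closed {G : nat -> topologicalType}
    {r : forall n, G n -> G n -> Prop} {g : forall n, G n.+1 -> G n} :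
  Defs.equivalence_rel (natrel r g) ->
  (forall (x : Ginf g) (A : set (Ginf g)), open A -> Bpt (natrel r g) x `<=` A ->
     exists (i : nat) (V : set (G i)), open V /\
       (proj_inf g i @^-1` V) x /\
       Bset (natrel r g) (proj_inf g i @^-1` V) `<=` A) ->
  forall C, closed C -> closed (Bset (natrel r g) C).
Proof.
move=> [_ [r_sym _]] basic C cC; rewrite -openC openE => x nCx.
have classC : Bpt (natrel r g) x `<=` ~` C.
  by move=> y /= rxy Cy; apply: nCx; exists y => //; exact: r_sym.
have [i [V [oV [Vx satV]]]] := basic x _ (closed_openC cC) classC.
apply: (@filterS _ _ _ (proj_inf g i @^-1` V)).
  by move=> y Vy [c Cc rcy]; apply: (satV c) Cc; exists y => //; exact: r_sym.
apply: open_nbhs_nbhs; split => //.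
by apply: open_comp => // y _; exact: proj_inf_continuous.
Qed.

Theorem mainTheorem6 (G : nat -> topologicalType)
  (r : forall n, G n -> G n -> Prop) (g : forall n, G n.+1 -> G n)
  (X : topologicalType) :
  gcell_structure r g ->
  homeomorphic X (Gstar r g) ->
  (forall n, metrizable (G n)) ->
  (forall (x : Ginf g) (A : set (Ginf g)), open A -> Bpt (natrel r g) x `<=` A ->
     exists (i : nat) (V : set (G i)), open V /\
       (proj_inf g i @^-1` V) x /\
       Bset (natrel r g) (proj_inf g i @^-1` V) `<=` A) ->
  normal_space X.
Proof.
move=> [_ r_equiv] XG G_metric basic.
pose d n : G n -> G n -> R := projT1 (cid (G_metric n)).
have d_metric n : is_metric (d n) := projT2 (cid _).
suff sepX : separates_closed X by exact/(@normal_openP R).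
apply: (homeomorphic_separates_closed XG).
apply: (quotient_separates_closed r_equiv).
apply: (saturated_separation r_equiv (saturation_closed r_equiv basic)).
exact: (subspace_separates_closed d_metric).
Qed.
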